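(* Let $\Sigma$ be an alphabet with $|\Sigma|\ge3$ and $k\ge1$. A function $f\colon(\Sigma^* )^k\to\Sigma^*$ is congruence preserving if and only if there exist $n\in\mathbb{N}$, words $w_0,\ldots,w_n\in\Sigma^*$, exponents $p_1,\ldots,p_n\in\mathbb{N}$ and indices $i_1,\ldots,i_n\in\{1,\ldots,k\}$ such that for all $x_1,\ldots,x_k\in\Sigma^*$, $$f(x_1,\ldots,x_k)=w_0\,x_{i_1}^{p_1}\,w_1\,x_{i_2}^{p_2}\,w_2\cdots x_{i_n}^{p_n}\,w_n.$$
   Context: $\Sigma^*$ is the free monoid over $\Sigma$ (finite words, concatenation, empty word $\varepsilon$); $x^p$ denotes the concatenation of $p$ copies of $x$. A congruence on $\Sigma^*$ is an equivalence relation $\sim$ such that $u\sim v$ and $u'\sim v'$ imply $uu'\sim vv'$. A function $f\colon(\Sigma^* )^k\to\Sigma^*$ is congruence preserving if for every congruence $\sim$ on $\Sigma^*$ and all $u_1,\ldots,u_k,v_1,\ldots,v_k\in\Sigma^*$ with $u_i\sim v_i$ for all $i$, we have $f(u_1,\ldots,u_k)\sim f(v_1,\ldots,v_k)$. *)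

From mathcomp Require Import all_boot.
Set Implicit Arguments. Unset Strict Implicit. Unset Printing Implicit Defensive.

Definition wpow (T : Type) (x : seq T) (p : nat) : seq T := flatten (nseq p x).

Definition is_congruence (T : Type) (R : seq T -> seq T -> Prop) : Prop :=
  [/\ (forall u, R u u),
      (forall u v, R u v -> R v u),
      (forall u v w, R u v -> R v w -> R u w) &
      (forall u v u' v', R u v -> R u' v' -> R (u ++ u') (v ++ v'))].

Definition congruence_preserving (T : Type) (k : nat)
    (f : ('I_k -> seq T) -> seq T) : Prop :=
  forall R : seq T -> seq T -> Prop, is_congruence R ->
  forall u v : 'I_k -> seq T, (forall i, R (u i) (v i)) -> R (f u) (f v).

(* w0 x_{i1}^{p1} w1 ... x_{in}^{pn} wn, with ts = [(i1,p1,w1); ...; (in,pn,wn)] *)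
Definition poly_word (T : Type) (k : nat) (w0 : seq T)
    (ts : seq ('I_k * nat * seq T)) (x : 'I_k -> seq T) : seq T :=
  w0 ++ flatten [seq wpow (x t.1.1) t.1.2 ++ t.2 | t <- ts].

From mathcomp Require Import all_boot zify.
Set Implicit Arguments. Unset Strict Implicit. Unset Printing Implicit Defensive.

(* Polynomial functions preserve congruences since congruences are compatible
   with concatenation.  Conversely, the kernel of every monoid morphism h of
   Sigma^* is a congruence, so h (u i) = h (v i) for all i implies
   h (f u) = h (f v).  Fix distinct letters a, b, c.  Comparing the values of
   f at (a, ..., a) and at (a, .., p, .., a) through the morphisms that merge
   two letters shows that each letter of f (a, ..., a) is either a constant or
   a copy of one variable; this gives a candidate polynomial.  Agreement of f
   with it is proved by induction on the total length of the arguments and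
   their number of letters other than a: merging a letter into a, or replacing
   a long argument by a fresh letter, gives smaller arguments, and in each case
   two such morphisms are jointly injective.  Empty arguments are handled
   with the three morphisms erasing a, b and c respectively. *)

Lemma nth_map_eq (T1 T2 : Type) (g : T1 -> T2) x0 s1 s2 j :
  map g s1 = map g s2 -> g (nth x0 s1 j) = g (nth x0 s2 j).
Proof.
move=> e; have sz12 : size s1 = size s2 by rewrite -(size_map g) e size_map.
have [lt_j|le_j] := ltnP j (size s1); last by rewrite !nth_default -?sz12.
by rewrite -!(nth_map x0 (g x0)) -?sz12 // e.
Qed.

Lemma map_inj2 (T1 T2 T3 : Type) (g1 : T1 -> T2) (g2 : T1 -> T3) s1 s2 :
    (forall x y, g1 x = g1 y -> g2 x = g2 y -> x = y) ->
  map g1 s1 = map g1 s2 -> map g2 s1 = map g2 s2 -> s1 = s2.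
Proof.
move=> g12_inj; elim: s1 s2 => [|x s1 IH] [|y s2] //= [e1 e1'] [e2 e2'].
by rewrite (g12_inj _ _ e1 e2) (IH _ e1' e2').
Qed.

Lemma catI (T : Type) : right_injective (@cat T).
Proof. by move=> s t1 t2; elim: s => //= x s IH [/IH]. Qed.

Lemma size_le1_mem (T : eqType) (s : seq T) y : size s <= 1 -> y \in s -> s = [:: y].
Proof. by case: s => [|z [|]] //= _; rewrite inE => /eqP ->. Qed.

Lemma three_letters (T : finType) : 3 <= #|T| ->
  exists a b c : T, [/\ a != b, a != c & b != c].
Proof.
rewrite cardE; move: (enum_uniq T); case: (enum T) => [|a [|b [|c s]]] //=.
rewrite !inE !negb_or => /and4P [/and3P [ab ac _] /andP [bc _] _ _] _.
by exists a, b, c.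
Qed.

Lemma eq_poly_word (T : Type) k w0 (ts : seq ('I_k * nat * seq T)) x y :
  x =1 y -> poly_word w0 ts x = poly_word w0 ts y.
Proof.
by move=> exy; rewrite /poly_word; congr (_ ++ flatten _); apply: eq_map => t; rewrite exy.
Qed.

Lemma poly_word_congruence_preserving (T : Type) k w0 (ts : seq ('I_k * nat * seq T)) :
  congruence_preserving (poly_word w0 ts).
Proof.
move=> R [Rrefl _ _ Rcat] u v uv.
have Rpow i p : R (wpow (u i) p) (wpow (v i) p).
  by elim: p => [|p IH]; [exact: Rrefl | exact: Rcat (uv i) IH].
apply: (Rcat); first exact: Rrefl.
elim: ts => [|t ts IH] /=; first exact: Rrefl.
by apply: (Rcat _ _ _ _ _ IH); apply: Rcat (Rpow _ _) (Rrefl _).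
Qed.

Section WordMorphisms.
Variable T : eqType.
Implicit Types (p q r t x y : T) (s w : seq T).

Definition wmorph (h : T -> seq T) s : seq T := flatten (map h s).

Definition merge p q x : T := if x == p then q else x.

Definition subst_letter r w x : seq T := if x == r then w else [:: x].

Lemma wmorph_cat h : {morph wmorph h : s1 s2 / s1 ++ s2}.
Proof. by move=> s1 s2; rewrite /wmorph map_cat flatten_cat. Qed.

Lemma wmorph_cons h x s : wmorph h (x :: s) = h x ++ wmorph h s.
Proof. by []. Qed.

Lemma wmorph_congruence h : is_congruence (fun u v => wmorph h u = wmorph h v).
Proof. by split=> [//|u v ->|u v w -> ->|u v u' v' e e'] //; rewrite !wmorph_cat e e'. Qed.

Lemma wmorph_letter (g : T -> T) s : wmorph (fun x => [:: g x]) s = map g s.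
Proof. by elim: s => // x s IH; rewrite wmorph_cons IH. Qed.

Lemma wmorph_erase r s : wmorph (subst_letter r [::]) s = filter (predC1 r) s.
Proof. by elim: s => // x s IH; rewrite wmorph_cons IH /subst_letter /=; case: eqP. Qed.

Lemma wmorph_subst_notin r w s : r \notin s -> wmorph (subst_letter r w) s = s.
Proof.
elim: s => //= x s IH; rewrite in_cons negb_or => /andP [rx /IH].
by rewrite wmorph_cons => ->; rewrite /subst_letter eq_sym (negbTE rx).
Qed.

Lemma merge_id p q x : x != p -> merge p q x = x.
Proof. by rewrite /merge => /negbTE ->. Qed.

Lemma merge_idem p q x : q != p -> merge p q (merge p q x) = merge p q x.
Proof.
by move=> qp; rewrite /merge; have [_|xp] := eqVneq x p; rewrite ?(negbTE qp) ?(negbTE xp).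
Qed.

Lemma merge_eq_id p q x y : merge p q x = y -> y != q -> x = y.
Proof. by rewrite /merge; case: eqP => // _ -> /eqP. Qed.

Lemma map_merge_notin p q s : p \notin s -> map (merge p q) s = s.
Proof.
elim: s => //= y s IH; rewrite in_cons negb_or => /andP [py /IH ->].
by rewrite merge_id // eq_sym.
Qed.

Lemma merge_eq_cases p q x y : merge p q x = merge p q y ->
  x = y \/ (x = p /\ y = q) \/ (x = q /\ y = p).
Proof.
rewrite /merge; case: (x =P p) => [->|xp]; case: (y =P p) => [->|yp] //; auto;
  by [move=> <-; auto|move=> ->; auto].
Qed.

Lemma merge_inj2 p q p' q' x y :
    ~~ ((p == p') && (q == q')) -> ~~ ((p == q') && (q == p')) ->
  merge p q x = merge p q y -> merge p' q' x = merge p' q' y -> x = y.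
Proof.
move=> n1 n2 /merge_eq_cases [//|[[-> ->]|[-> ->]]]
  /merge_eq_cases [//|[[e1 e2]|[e1 e2]]];
  subst; move: n1 n2; rewrite !eqxx //= ?andbT.
Qed.

Lemma map_merge_subst_inj p q r w s1 s2 : r != p -> r != q ->
    map (merge p q) s1 = map (merge p q) s2 ->
    wmorph (subst_letter r w) s1 = wmorph (subst_letter r w) s2 ->
  s1 = s2.
Proof.
move=> rp rq; elim: s1 s2 => [|x s1 IH] [|y s2] //= [exy /IH {}IH].
have merge_r z : (merge p q z == r) = (z == r).
  by rewrite /merge; case: (z =P p) => [->|//]; rewrite ![_ == r]eq_sym (negbTE rp) (negbTE rq).
have xy_r : (x == r) = (y == r) by rewrite -merge_r exy merge_r.
rewrite !wmorph_cons /subst_letter -xy_r.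
have [xr|_] := eqVneq x r; last by case=> -> /IH ->.
have yr : y = r by apply/eqP; rewrite -xy_r xr.
by move=> /catI /IH ->; rewrite xr yr.
Qed.

Lemma subst_inj2 r t w s1 s2 : r != t -> w != [::] ->
    wmorph (subst_letter r w) s1 = wmorph (subst_letter r w) s2 ->
    wmorph (subst_letter t w) s1 = wmorph (subst_letter t w) s2 ->
  s1 = s2.
Proof.
case: w => [//|z w'] rt _.
have substE r' x : subst_letter r' (z :: w') x =
    merge r' z x :: (if x == r' then w' else [::]).
  by rewrite /subst_letter /merge; case: (x == r').
elim: s1 s2 => [|x s1 IH] [|y s2] //; rewrite !wmorph_cons !substE //.
have [->|xy] := eqVneq x y; first by move=> /catI e1 /catI e2; rewrite (IH _ e1 e2).
move=> [e1 _] [e2 _]; case/negP: xy; apply/eqP.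
apply: (merge_inj2 _ _ e1 e2); rewrite ?eqxx ?andbT //.
by apply/negP => /andP [/eqP f1 /eqP f2]; rewrite f1 f2 eqxx in rt.
Qed.

Lemma filter_predC1_inj3 p q r s1 s2 : uniq [:: p; q; r] ->
    filter (predC1 p) s1 = filter (predC1 p) s2 ->
    filter (predC1 q) s1 = filter (predC1 q) s2 ->
    filter (predC1 r) s1 = filter (predC1 r) s2 ->
  s1 = s2.
Proof.
move=> pqr Ep Eq Er.
have E l : l \in [:: p; q; r] -> filter (predC1 l) s1 = filter (predC1 l) s2.
  by rewrite !inE => /or3P [] /eqP ->.
have avoid x y : exists2 l, l \in [:: p; q; r] & l \notin [:: x; y].
  apply/hasP/negPn/negP => /hasPn in_xy.
  by have := uniq_leq_size pqr (fun l hl => negbNE (in_xy l hl)).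
elim: s1 s2 E {Ep Eq Er} => [|x s1 IH] [|y s2] // E.
- by have [l /E /= + ly] := avoid y y; rewrite !inE orbb in ly; rewrite eq_sym ly.
- by have [l /E /= + lx] := avoid x x; rewrite !inE orbb in lx; rewrite eq_sym lx.
move: E; have [<-|xy] := eqVneq x y => E.
  by rewrite (IH s2) // => l /E /=; case: (x != l) => // -[].
have [l /E /= + lxy] := avoid x y; rewrite !inE negb_or in lxy.
by case/andP: lxy => lx ly; rewrite (eq_sym x) (eq_sym y) lx ly => -[/eqP]; rewrite (negbTE xy).
Qed.

End WordMorphisms.

Section Template.
Variables (Sigma : finType) (k : nat) (f : ('I_k -> seq Sigma) -> seq Sigma).
Hypothesis f_cp : congruence_preserving f.
Variables (a b c : Sigma) (i0 : 'I_k).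
Hypotheses (ab : a != b) (ac : a != c) (bc : b != c).
Implicit Types (p q r : Sigma) (x y u : 'I_k -> seq Sigma).

Lemma f_ext x y : x =1 y -> f x = f y.
Proof. by apply: f_cp; split=> // [u v w -> //|u v u' v' -> ->]. Qed.

Lemma map_merge_f p q x y :
    (forall i, map (merge p q) (x i) = map (merge p q) (y i)) ->
  map (merge p q) (f x) = map (merge p q) (f y).
Proof.
move=> xy; rewrite -!wmorph_letter; apply: f_cp (wmorph_congruence _) _ _ _ => i.
by rewrite !wmorph_letter.
Qed.

Definition const_a : 'I_k -> seq Sigma := fun=> [:: a].

Definition point (i : 'I_k) p : 'I_k -> seq Sigma :=
  fun j => if j == i then [:: p] else [:: a].

Definition base := f const_a.

Definition out (i : 'I_k) p j : Sigma := nth a (f (point i p)) j.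

Lemma map_merge_point i p : map (merge p a) (f (point i p)) = map (merge p a) base.
Proof.
apply: map_merge_f => l; rewrite /point /const_a; case: ifP => //= _.
by rewrite /merge eqxx if_same.
Qed.

Lemma map_merge_point2 i p q :
  map (merge p q) (f (point i p)) = map (merge p q) (f (point i q)).
Proof.
apply: map_merge_f => l; rewrite /point; case: ifP => //= _.
by rewrite /merge eqxx if_same.
Qed.

Lemma size_f_point i p : size (f (point i p)) = size base.
Proof. by rewrite -(size_map (merge p a)) map_merge_point size_map. Qed.

Lemma merge_out i p j : merge p a (out i p j) = merge p a (nth a base j).
Proof. exact: nth_map_eq (map_merge_point i p). Qed.

Lemma merge_out2 i p q j : merge p q (out i p j) = merge p q (out i q j).
Proof. exact: nth_map_eq (map_merge_point2 i p q). Qed.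

Lemma out_a i j : out i a j = nth a base j.
Proof. by rewrite /out /base (@f_ext _ const_a) // => l; rewrite /point; case: ifP. Qed.

Lemma out_hole i j : out i b j != nth a base j ->
  nth a base j = a /\ forall p, out i p j = p.
Proof.
move=> hole_ij.
have [base_a out_b] : nth a base j = a /\ out i b j = b.
  case/merge_eq_cases: (merge_out i b j) => [e|[[-> ->] //|[out_a' base_b]]].
    by rewrite e eqxx in hole_ij.
  have out_c : out i c j = b.
    have := merge_out i c j; rewrite base_b (merge_id _ bc) => /merge_eq_id.
    by apply; rewrite eq_sym.
  have := merge_out2 i c b j; rewrite out_c out_a' !merge_id // => /eqP.
  by rewrite eq_sym (negbTE ab).
split=> // p.
have [->|pa] := eqVneq p a; first by rewrite out_a.
have [->|pb] := eqVneq p b; first by [].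
apply: (@merge_inj2 _ p a p b); rewrite ?eqxx ?(negbTE ab) ?(negbTE pb) //.
  by rewrite merge_out base_a /merge eqxx if_same.
by rewrite merge_out2 out_b /merge eqxx if_same.
Qed.

Lemma out_const i j : out i b j = nth a base j -> forall p, out i p j = nth a base j.
Proof.
move=> out_b p.
have [->|pa] := eqVneq p a; first by rewrite out_a.
have [->|pb] := eqVneq p b; first by [].
apply: (@merge_inj2 _ p a p b); rewrite ?eqxx ?(negbTE ab) ?(negbTE pb) //.
  exact: merge_out.
by rewrite merge_out2 out_b.
Qed.

Lemma out_hole_unique i i' j : i != i' ->
  out i b j != nth a base j -> out i' b j = nth a base j.
Proof.
move=> ii' hole_i; apply/eqP; apply: contraT => hole_i'.
have [_ out_i] := out_hole hole_i; have [_ out_i'] := out_hole hole_i'.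
pose v l := if l == i then [:: b] else if l == i' then [:: c] else [:: a].
have v_b : merge c a (nth a (f v) j) = b.
  have e : map (merge c a) (f v) = map (merge c a) (f (point i b)).
    apply: map_merge_f => l; rewrite /v /point; case: eqP => //= _.
    by case: eqP => //= _; rewrite /merge eqxx if_same.
  by rewrite (nth_map_eq a j e) -/(out i b j) out_i merge_id.
have v_c : merge b a (nth a (f v) j) = c.
  have e : map (merge b a) (f v) = map (merge b a) (f (point i' c)).
    apply: map_merge_f => l; rewrite /v /point; case: eqP => [->|_] /=.
      by rewrite (negbTE ii') /merge /= eqxx (negbTE ab).
    by case: eqP => //= _; rewrite /merge eqxx if_same.
  by rewrite (nth_map_eq a j e) -/(out i' c j) out_i' merge_id // eq_sym.
have v_j_b : nth a (f v) j = b by apply: (merge_eq_id v_b); rewrite eq_sym.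
have v_j_c : nth a (f v) j = c by apply: (merge_eq_id v_c); rewrite eq_sym.
by move: bc; rewrite -v_j_b v_j_c eqxx.
Qed.

Definition hole j : option 'I_k := [pick i | out i b j != nth a base j].

(* The constant letter s is encoded as the piece x_i0^0 s. *)
Definition template : seq ('I_k * nat * seq Sigma) :=
  mkseq (fun j => if hole j is Some i then (i, 1, [::]) else (i0, 0, [:: nth a base j]))
    (size base).

Definition agrees x := f x = poly_word [::] template x.

Lemma agrees_ext x y : x =1 y -> agrees x -> agrees y.
Proof. by move=> xy; rewrite /agrees (f_ext xy) (eq_poly_word _ _ xy). Qed.

Lemma poly_word_template_letters (g : 'I_k -> Sigma) x : (forall l, x l = [:: g l]) ->
  poly_word [::] template x =
    mkseq (fun j => if hole j is Some i then g i else nth a base j) (size base).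
Proof.
move=> xg; rewrite /poly_word /template /mkseq -map_comp -[RHS]flatten_seq1 -map_comp.
by congr flatten; apply: eq_map => j /=; case: (hole j) => [i|] /=; rewrite /wpow /= ?xg.
Qed.

Lemma agrees_point i p : agrees (point i p).
Proof.
rewrite /agrees (@poly_word_template_letters (fun l => if l == i then p else a)); last first.
  by move=> l; rewrite /point; case: ifP.
apply: (@eq_from_nth _ a); first by rewrite size_mkseq size_f_point.
move=> j; rewrite size_f_point => lt_j; rewrite nth_mkseq // -/(out i p j) /hole.
case: pickP => [i' hole_i'|no_hole] /=.
  have [<-|i'i] := eqVneq i' i; first exact: (out_hole hole_i').2.
  by rewrite (out_const (out_hole_unique i'i hole_i')) (out_hole hole_i').1.
by apply: out_const; apply/eqP; rewrite -[_ == _]negbK no_hole.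
Qed.

Lemma agrees_const_a : agrees const_a.
Proof. by apply: agrees_ext (agrees_point i0 a) => l; rewrite /point; case: ifP. Qed.

Lemma wmorph_agrees h u x : agrees u ->
    (forall i, wmorph h (u i) = wmorph h (x i)) ->
  wmorph h (f x) = wmorph h (poly_word [::] template x).
Proof.
move=> agrees_u ux; rewrite -(f_cp (wmorph_congruence h) ux) agrees_u.
exact: poly_word_congruence_preserving (wmorph_congruence h) _ _ ux.
Qed.

Definition merge_args p q x : 'I_k -> seq Sigma := fun i => map (merge p q) (x i).

Lemma map_merge_agrees p q x : q != p -> agrees (merge_args p q x) ->
  map (merge p q) (f x) = map (merge p q) (poly_word [::] template x).
Proof.
move=> qp agrees_x'; rewrite -!wmorph_letter; apply: (wmorph_agrees agrees_x') => i.
by rewrite !wmorph_letter /merge_args -map_comp; apply: eq_map => y /=; rewrite merge_idem.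
Qed.

Lemma agrees_erase_empty x :
  (forall l, agrees (fun i => if x i == [::] then [:: l] else x i)) -> agrees x.
Proof.
move=> agrees_filled.
have erase_l l : filter (predC1 l) (f x) = filter (predC1 l) (poly_word [::] template x).
  rewrite -!wmorph_erase; apply: wmorph_agrees (agrees_filled l) _ => i.
  by case: eqP => [->|]; rewrite // wmorph_cons /subst_letter eqxx.
apply: (filter_predC1_inj3 _ (erase_l a) (erase_l b) (erase_l c)).
by rewrite /= !inE negb_or ab ac bc.
Qed.

Definition set_arg x (i : 'I_k) w : 'I_k -> seq Sigma :=
  fun l => if l == i then w else x l.

Definition occurs p x := [exists i, p \in x i].

Definition total_size x := \sum_(i < k) size (x i).

Definition weight x := \sum_(i < k) count (predC1 a) (x i).

Definition measure_lt y x :=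
  (total_size y < total_size x) || (total_size y == total_size x) && (weight y < weight x).

Lemma sum_set_arg (F : seq Sigma -> nat) x i w :
  \sum_(l < k) F (set_arg x i w l) + F (x i) = \sum_(l < k) F (x l) + F w.
Proof.
rewrite (bigD1 i) //= [X in _ = X + _](bigD1 i) //= /set_arg eqxx.
under eq_bigr => l hl do rewrite (negbTE hl).
lia.
Qed.

Lemma total_size_merge_args p q x : total_size (merge_args p q x) = total_size x.
Proof. by apply: eq_bigr => i _; rewrite size_map. Qed.

Lemma count_merge p s : p != a ->
  count (predC1 a) (map (merge p a) s) + count (pred1 p) s = count (predC1 a) s.
Proof.
move=> pa; elim: s => [|y s IH] //=.
have [->|yp] := eqVneq y p; last by rewrite merge_id //= add0n -IH addnA.
by rewrite /= [merge p a p]/merge !eqxx pa -IH /=; lia.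
Qed.

Lemma weight_merge_args_lt p x : p != a -> occurs p x ->
  weight (merge_args p a x) < weight x.
Proof.
move=> pa /existsP [i p_xi].
have count_p : 0 < count (pred1 p) (x i) by rewrite -has_count has_pred1.
have : weight (merge_args p a x) + \sum_(l < k) count (pred1 p) (x l) = weight x.
  by rewrite /weight -big_split; apply: eq_bigr => l _; exact: count_merge.
rewrite (bigD1 i) //= => <-.
by rewrite -[X in X < _]addn0 ltn_add2l ltn_addr.
Qed.

Section Step.
Variable x : 'I_k -> seq Sigma.
Hypothesis x_full : forall i, x i != [::].
Hypothesis IH : forall y, (forall i, y i != [::]) -> measure_lt y x -> agrees y.

Lemma set_arg_full i w : w != [::] -> forall l, set_arg x i w l != [::].
Proof. by move=> w_full l; rewrite /set_arg; case: ifP. Qed.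

Lemma merge_step p : p != a -> occurs p x ->
  map (merge p a) (f x) = map (merge p a) (poly_word [::] template x).
Proof.
move=> pa p_x; apply: map_merge_agrees; first by rewrite eq_sym.
apply: IH => [i|]; first by rewrite /merge_args -size_eq0 size_map size_eq0.
by rewrite /measure_lt total_size_merge_args eqxx weight_merge_args_lt ?orbT.
Qed.

Lemma subst_step i r : 1 < size (x i) -> (forall l, r \notin x l) ->
  wmorph (subst_letter r (x i)) (f x) =
    wmorph (subst_letter r (x i)) (poly_word [::] template x).
Proof.
move=> x_i_long r_fresh; apply: (@wmorph_agrees _ (set_arg x i [:: r])).
  apply: IH; first exact: set_arg_full.
  by have := sum_set_arg size x i [:: r]; rewrite /measure_lt /total_size /=; lia.
move=> l; rewrite /set_arg; case: eqP => [->|] //.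
by rewrite [RHS]wmorph_subst_notin // wmorph_cons /subst_letter eqxx cats0.
Qed.

Lemma agrees_two_letters p q : p != a -> q != a -> p != q ->
  occurs p x -> occurs q x -> agrees x.
Proof.
move=> pa qa pq p_x q_x; apply: (map_inj2 _ (merge_step pa p_x) (merge_step qa q_x)).
by move=> y z; apply: merge_inj2; rewrite ?(negbTE pq) ?(negbTE pa).
Qed.

Lemma agrees_fresh_letters_long r t i : r != t ->
    (forall l, r \notin x l) -> (forall l, t \notin x l) -> 1 < size (x i) ->
  agrees x.
Proof.
move=> rt r_fresh t_fresh x_i_long.
exact: subst_inj2 rt (x_full i) (subst_step x_i_long r_fresh) (subst_step x_i_long t_fresh).
Qed.

Lemma agrees_one_letter_long p r i : p != a -> occurs p x ->
    r != a -> r != p -> (forall l, r \notin x l) -> 1 < size (x i) ->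
  agrees x.
Proof.
move=> pa p_x ra rp r_fresh x_i_long.
exact: map_merge_subst_inj rp ra (merge_step pa p_x) (subst_step x_i_long r_fresh).
Qed.

Section OneLetterShort.
Variables (p r : Sigma) (i j : 'I_k).
Hypotheses (pa : p != a) (ra : r != a) (rp : r != p) (r_fresh : forall l, r \notin x l).
Hypotheses (x_i : x i = [:: p]) (ji : j != i) (p_x_j : p \in x j).

Lemma agrees_set_fresh : agrees (set_arg x i [:: r]).
Proof.
have measure_z_a : measure_lt (set_arg x i [:: a]) x.
  have := sum_set_arg size x i [:: a]; have := sum_set_arg (count (predC1 a)) x i [:: a].
  by rewrite /measure_lt /total_size /weight x_i /= pa eqxx; lia.
rewrite /agrees; apply: (@map_inj2 _ _ _ (merge r a) (merge p a)).
- by move=> y z; apply: merge_inj2; rewrite ?(negbTE rp) ?(negbTE ra).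
- apply: map_merge_agrees; first by rewrite eq_sym.
  apply: (@agrees_ext (set_arg x i [:: a])); last exact: IH (set_arg_full _ _) measure_z_a.
  move=> l; rewrite /merge_args /set_arg; case: eqP => _; first by rewrite /= /merge eqxx.
  by rewrite map_merge_notin.
- apply: map_merge_agrees; first by rewrite eq_sym.
  apply: IH => [l|]; first by rewrite /merge_args -size_eq0 size_map size_eq0; exact: set_arg_full.
  have := sum_set_arg size x i [:: r]; have := sum_set_arg (count (predC1 a)) x i [:: r].
  have := @weight_merge_args_lt p (set_arg x i [:: r]) pa.
  rewrite /measure_lt total_size_merge_args /total_size /weight x_i /= pa ra.
  have -> : occurs p (set_arg x i [:: r]) by apply/existsP; exists j; rewrite /set_arg (negbTE ji).
  by lia.
Qed.

Lemma agrees_one_letter_short : agrees x.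
Proof.
have p_x : occurs p x by apply/existsP; exists j.
rewrite /agrees; apply: (@map_inj2 _ _ _ (merge r p) (merge p a)).
- by move=> y z; apply: merge_inj2; rewrite ?(negbTE rp) ?(negbTE ra).
- rewrite -!wmorph_letter; apply: (wmorph_agrees agrees_set_fresh) => l.
  rewrite !wmorph_letter /set_arg; case: eqP => [->|] //.
  by rewrite x_i /= /merge eqxx if_same.
- exact: merge_step pa p_x.
Qed.

End OneLetterShort.

Lemma head_arg_mem l : head a (x l) \in x l.
Proof. by move: (x_full l); case: (x l) => // y s _; exact: mem_head. Qed.

Lemma short_arg l (y : Sigma) : ~~ [exists i, 1 < size (x i)] -> y \in x l -> x l = [:: y].
Proof. by move=> /existsPn /(_ l); rewrite -leqNgt; exact: size_le1_mem. Qed.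

Lemma agrees_one_letter p : p != a -> occurs p x ->
  (forall q, q != a -> occurs q x -> q = p) -> agrees x.
Proof.
move=> pa p_x only_p.
have [r ra rp] : exists2 r, r != a & r != p.
  by have [->|pb] := eqVneq p b; [exists c | exists b]; rewrite // eq_sym.
have r_fresh l : r \notin x l.
  by apply: contra rp => r_x; apply/eqP; apply: only_p ra _; apply/existsP; exists l.
have [/existsP [i x_i_long]|no_long] := boolP [exists i, 1 < size (x i)].
  exact: agrees_one_letter_long pa p_x ra rp r_fresh x_i_long.
have [i p_x_i] := existsP p_x; have x_i := short_arg no_long p_x_i.
have [/existsP [j /andP [ji x_j_a]]|only_i] := boolP [exists j, (j != i) && (x j != [:: a])].
  have x_j := short_arg no_long (head_arg_mem j).
  have p_x_j : p \in x j.
    rewrite x_j inE eq_sym (only_p (head a (x j))) //.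
      by apply: contra x_j_a => /eqP y_a; rewrite x_j y_a.
    by apply/existsP; exists j; exact: head_arg_mem.
  exact: agrees_one_letter_short pa ra rp r_fresh x_i ji p_x_j.
apply: agrees_ext (agrees_point i p) => l; rewrite /point; case: eqP => [->//|/eqP li].
by apply/esym/eqP; move/existsPn: only_i => /(_ l); rewrite li negbK.
Qed.

Lemma agrees_no_letter : (forall l (y : Sigma), y \in x l -> y = a) -> agrees x.
Proof.
move=> only_a.
have fresh r : r != a -> forall l, r \notin x l.
  by move=> ra l; apply: contra ra => /only_a ->.
have [/existsP [i x_i_long]|no_long] := boolP [exists i, 1 < size (x i)].
  by apply: agrees_fresh_letters_long bc (fresh b _) (fresh c _) x_i_long; rewrite eq_sym.
apply: agrees_ext agrees_const_a => l.
by rewrite (short_arg no_long (head_arg_mem l)) (only_a _ _ (head_arg_mem l)).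
Qed.

Lemma agrees_step : agrees x.
Proof.
have [/existsP [p /andP [pa p_x]]|no_letter] := boolP [exists p, (p != a) && occurs p x].
  have [/existsP [q /and3P [qa qp q_x]]|no_other] :=
    boolP [exists q, [&& q != a, q != p & occurs q x]].
    by apply: agrees_two_letters pa qa _ p_x q_x; rewrite eq_sym.
  apply: agrees_one_letter pa p_x _ => q qa q_x; apply/eqP.
  by apply: contraNT no_other => qp; apply/existsP; exists q; rewrite qa qp.
apply: agrees_no_letter => l y y_x; apply/eqP; apply: contraNT no_letter => ya.
by apply/existsP; exists y; rewrite ya; apply/existsP; exists l.
Qed.

End Step.

Lemma agrees_full x : (forall i, x i != [::]) -> agrees x.
Proof.
have [n] := ubnP (total_size x); have [m] := ubnP (weight x).
elim: n m x => // n IHn m; elim: m => // m IHm x w_x s_x x_full.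
apply: agrees_step x_full _ => y y_full /orP [lt_s|/andP [/eqP eq_s lt_w]].
  by apply: (IHn (weight y).+1) => //; exact: leq_trans lt_s s_x.
by apply: IHm => //; [exact: leq_trans lt_w w_x | rewrite eq_s].
Qed.

Lemma agrees_all x : agrees x.
Proof. by apply: agrees_erase_empty => l; apply: agrees_full => i; case: ifP => // /negbT. Qed.

End Template.

Theorem mainTheorem19 (Sigma : finType) (k : nat)
    (hSigma : 3 <= #|Sigma|) (hk : 1 <= k)
    (f : ('I_k -> seq Sigma) -> seq Sigma) :
  congruence_preserving f <->
  exists (w0 : seq Sigma) (ts : seq ('I_k * nat * seq Sigma)),
    forall x : 'I_k -> seq Sigma, f x = poly_word w0 ts x.
Proof.
split=> [f_cp | [w0 [ts f_poly]] R R_cong u v uv].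
  have [a [b [c [ab ac bc]]]] := three_letters hSigma.
  exists [::], (template f a b (Ordinal hk)) => x.
  exact: (agrees_all f_cp (Ordinal hk) ab ac bc x).
rewrite !f_poly; exact: poly_word_congruence_preserving R_cong u v uv.
Qed.
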